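(* Let $\varphi:L\to L'$ be a morphism of co-Heyting algebras and $d$ a positive integer. (1) $\varphi(dL)\subseteq dL'$. (2) If $\varphi$ is surjective then: (a) $\varphi(dL)=dL'$; (b) $\dim L'<d$ if and only if $dL\subseteq\operatorname{Ker}\varphi$; (c) $\operatorname{Ker}\varphi\subseteq dL$ if and only if $\varphi^{-1}(dL')=dL$. (3) If $\varphi$ is surjective and the ideal $dL$ is principal, then $dL'$ is principal and $\varphi(\varepsilon_d(L))=\varepsilon_d(L')$.
   Context: A co-Heyting algebra is a bounded distributive lattice $(L,0,1,\vee,\wedge)$ such that $a-b=\min\{c\in L: a\le b\vee c\}$ exists for all $a,b$; morphisms preserve $0,1,\vee,\wedge,-$, and $\operatorname{Ker}\varphi=\varphi^{-1}(\{0\})$. $\operatorname{Spec}L$ is the set of prime filters ordered by inclusion; the height (resp. coheight) of a prime filter is its foundation rank (resp. foundation rank for the reverse order) in $\operatorname{Spec}L$, where foundation rank is defined by: $\operatorname{rk}x\ge\beta+1$ iff some $y<x$ has $\operatorname{rk}y\ge\beta$, and at limit ordinals by intersection. $\operatorname{codim}_L a=\min\{\operatorname{height}\mathfrak p: a\in\mathfrak p\in\operatorname{Spec}L\}$ ($\min\emptyset=+\infty$), $\dim_L a=\sup\{\operatorname{coheight}\mathfrak p: a\in\mathfrak p\in\operatorname{Spec}L\}$ ($\sup\emptyset=-\infty$), and $\dim L=\dim_L 1$. $dL=\{a\in L:\operatorname{codim}_La\ge d\}$, an ideal of $L$; when it is principal, $\varepsilon_d(L)$ denotes its generator. *)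

From mathcomp Require Import all_boot all_order.
Unset Printing Implicit Defensive.
Import Order.Theory.
Local Open Scope order_scope.

(* Bounded distributive lattices are mathcomp's [tbDistrLatticeType]
   (bottom = 0 = \bot, top = 1 = \top, join `|`, meet `&`).
   A co-Heyting algebra is such a lattice together with an operation [sub]
   such that [sub a b] is the least c with a <= b `|` c.  Since this least
   element is unique, giving the operation is equivalent to requiring it
   to exist. *)
Definition coHeyting {disp : Order.disp_t} {L : tbDistrLatticeType disp}
  (sub : L -> L -> L) : Prop :=
  forall a b c : L, (a <= b `|` c) <-> (sub a b <= c).

Definition coH_morphism {d1 d2 : Order.disp_t}
  {L : tbDistrLatticeType d1} {L' : tbDistrLatticeType d2}
  (sub : L -> L -> L) (sub' : L' -> L' -> L') (phi : L -> L') : Prop :=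
  [/\ phi \bot = \bot, phi \top = \top,
      (forall a b, phi (a `|` b) = phi a `|` phi b),
      (forall a b, phi (a `&` b) = phi a `&` phi b)
    & (forall a b, phi (sub a b) = sub' (phi a) (phi b))].

Definition kernel {d1 d2 : Order.disp_t}
  {L : tbDistrLatticeType d1} {L' : tbDistrLatticeType d2}
  (phi : L -> L') (a : L) : Prop := phi a = \bot.

Definition prime_filter {disp : Order.disp_t} {L : tbDistrLatticeType disp}
  (p : L -> Prop) : Prop :=
  [/\ p \top, ~ p \bot,
      (forall a b, a <= b -> p a -> p b),
      (forall a b, p a -> p b -> p (a `&` b))
    & (forall a b, p (a `|` b) -> p a \/ p b)].

Definition strict_incl {disp : Order.disp_t} {L : tbDistrLatticeType disp}
  (q p : L -> Prop) : Prop :=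
  (forall x, q x -> p x) /\ exists x, p x /\ ~ q x.

(* [height_ge n p] : the foundation rank of p in Spec L is >= n
   (finite n: rk >= 0 always; rk >= n+1 iff some q < p has rk q >= n). *)
Fixpoint height_ge {disp : Order.disp_t} {L : tbDistrLatticeType disp}
  (n : nat) (p : L -> Prop) : Prop :=
  match n with
  | 0 => True
  | n'.+1 => exists q, prime_filter q /\ strict_incl q p /\ height_ge n' q
  end.

(* [coheight_ge n p] : foundation rank of p for the reverse order is >= n. *)
Fixpoint coheight_ge {disp : Order.disp_t} {L : tbDistrLatticeType disp}
  (n : nat) (p : L -> Prop) : Prop :=
  match n with
  | 0 => True
  | n'.+1 => exists q, prime_filter q /\ strict_incl p q /\ coheight_ge n' q
  end.

(* codim_L a >= d  <->  every prime filter containing a has height >= d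
   (min over the empty set is +oo). *)
Definition codim_ge {disp : Order.disp_t} {L : tbDistrLatticeType disp}
  (d : nat) (a : L) : Prop :=
  forall p, prime_filter p -> p a -> height_ge d p.

Definition dIdeal {disp : Order.disp_t} (L : tbDistrLatticeType disp)
  (d : nat) (a : L) : Prop := codim_ge d a.

(* dim L < d  <->  sup of coheights of all prime filters is < d
   (sup over the empty set is -oo). *)
Definition dim_lt {disp : Order.disp_t} (L : tbDistrLatticeType disp)
  (d : nat) : Prop :=
  forall p : L -> Prop, prime_filter p -> p \top -> ~ coheight_ge d p.

Definition is_eps {disp : Order.disp_t} (L : tbDistrLatticeType disp)
  (d : nat) (e : L) : Prop :=
  forall a : L, dIdeal L d a <-> a <= e.

Definition surj {A B : Type} (f : A -> B) : Prop := forall b, exists a, f a = b.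

(* A prime filter has height >= n iff it contains an element of codimension
   >= n.  Indeed, if q is strictly below p, x lies in p but not in q, and
   c in q has codimension >= n, then x `&` sub c x lies in p and has
   codimension >= n + 1: every prime filter r containing sub c x contains a
   prime filter s with c in s and x not in s, which is strictly below r as
   soon as x is in r.  Prime filters are obtained by separating filters from
   ideals (Zorn).  A co-Heyting morphism satisfies going down, so taking
   preimages of prime filters does not increase their height, and preimages
   under a surjection preserve strict chains; all statements follow by
   comparing heights of a prime filter of L' and of its preimage. *)

From mathcomp Require Import all_boot all_order.
From mathcomp Require Import boolp classical_sets.
Import Order.Theory.
Local Open Scope order_scope.

Section LatticeFilters.
Context {disp : Order.disp_t} {L : tbDistrLatticeType disp}.
Implicit Types (a b x y : L) (F I J p : L -> Prop).

Definition lattice_filter F : Prop :=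
  [/\ F \top, (forall a b, a <= b -> F a -> F b)
    & (forall a b, F a -> F b -> F (a `&` b))].

Definition lattice_ideal I : Prop :=
  [/\ I \bot, (forall a b, a <= b -> I b -> I a)
    & (forall a b, I a -> I b -> I (a `|` b))].

Lemma ge_filter a : lattice_filter (fun x => a <= x).
Proof.
split=> [|x y xy ax|x y ax ay]; [exact: lex1|exact: le_trans xy|].
by rewrite lexI ax ay.
Qed.

Lemma le_ideal a : lattice_ideal (fun x => x <= a).
Proof.
split=> [|x y xy ya|x y xa ya]; [exact: le0x|exact: le_trans ya|].
by rewrite leUx xa ya.
Qed.

Lemma prime_filter_filter p : prime_filter p -> lattice_filter p.
Proof. by case. Qed.

Lemma prime_filter_compl p : prime_filter p -> lattice_ideal (fun x => ~ p x).
Proof.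
case=> _ p0 pup _ pjoin; split=> // [x y xy npy px|x y npx npy /pjoin[]//].
exact: npy (pup _ _ xy px).
Qed.

Definition ideal_join I J x : Prop := exists i j, [/\ I i, J j & x <= i `|` j].

Lemma ideal_join_ideal I J :
  lattice_ideal I -> lattice_ideal J -> lattice_ideal (ideal_join I J).
Proof.
case=> I0 _ IU [J0 _ JU]; split.
- by exists \bot, \bot; rewrite le0x.
- by move=> x y xy [i [j [Ii Jj yij]]]; exists i, j; split=> //; exact: le_trans yij.
- move=> x y [i [j [Ii Jj xij]]] [i' [j' [Ii' Jj' yij]]].
  exists (i `|` i'), (j `|` j'); split; [exact: IU|exact: JU|].
  by rewrite leUx (le_trans xij) ?(le_trans yij) // leU2 ?leUl ?leUr.
Qed.

Lemma ideal_join_l {I J x} : J \bot -> I x -> ideal_join I J x.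
Proof. by move=> J0 Ix; exists x, \bot; rewrite joinx0. Qed.

Lemma ideal_join_r {I J x} : I \bot -> J x -> ideal_join I J x.
Proof. by move=> I0 Jx; exists \bot, x; rewrite join0x. Qed.

Definition maximal_disjoint_filter I G : Prop :=
  [/\ lattice_filter G, (forall x, G x -> ~ I x)
    & forall G', lattice_filter G' -> (forall x, G x -> G' x) ->
        (forall x, G' x -> ~ I x) -> forall x, G' x -> G x].

Lemma maximal_filter_prime I G :
  lattice_ideal I -> maximal_disjoint_filter I G -> prime_filter G.
Proof.
move=> [I0 Idown IU] [[G1 Gup Gmeet] disjG maxG].
have meets_ideal a : ~ G a -> exists g i, [/\ G g, I i & g `&` a <= i].
  move=> nGa; apply: contrapT => noi.
  pose B z := exists2 g, G g & g `&` a <= z.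
  apply: nGa (maxG B _ _ _ a _).
  - split=> [|x y xy [g Gg gx]|x y [g Gg gx] [h Gh hy]].
    + by exists \top => //; exact: lex1.
    + by exists g => //; exact: le_trans xy.
    + exists (g `&` h); first exact: Gmeet.
      by rewrite lexI (le_trans _ gx) ?(le_trans _ hy) // leI2 ?leIl ?leIr.
  - by move=> x Gx; exists x => //; exact: leIl.
  - by move=> x [g Gg ga] Ix; apply: noi; exists g, x.
  - by exists \top => //; exact: leIr.
split=> // [G0|a b Gab]; first exact: disjG G0 I0.
apply: contrapT => nab.
have [g [i [Gg Ii gai]]] := meets_ideal a (fun Ga => nab (or_introl Ga)).
have [h [j [Gh Ij hbj]]] := meets_ideal b (fun Gb => nab (or_intror Gb)).
apply: (disjG ((g `&` h) `&` (a `|` b))); first exact: Gmeet (Gmeet _ _ Gg Gh) Gab.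
apply: (Idown _ (i `|` j)); last exact: IU.
by rewrite meetUr leU2 // ?(le_trans _ gai) ?(le_trans _ hbj) // leI2 ?leIl ?leIr.
Qed.

Section Separation.
Variables F I : L -> Prop.
Hypotheses (filterF : lattice_filter F) (idealI : lattice_ideal I)
  (disjFI : forall x, F x -> ~ I x).

(* Zorn is applied to the sets H extending F, so that the empty chain is harmless. *)
Definition disjoint_extension H : Prop :=
  lattice_filter (fun x => F x \/ H x) /\ forall x, F x \/ H x -> ~ I x.

Lemma exists_maximal_extension : exists A, disjoint_extension A /\
  forall B, proper A B -> ~ disjoint_extension B.
Proof.
apply: Zorn_bigcup => C CP Ctot; set U := (\bigcup_(X in C) X)%classic.
have in_one x y : F x \/ U x -> F y \/ U y -> exists H,
    [/\ disjoint_extension H, (forall z, H z -> U z), F x \/ H x & F y \/ H y].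
  have extension0 : disjoint_extension (fun _ => False).
    case: filterF => F1 Fup Fmeet; split=> [|z [//|[]]]; last exact: disjFI.
    by split=> [|a b ab [Fa|[]]|a b [Fa|[]] [Fb|[]]];
      left; [|exact: Fup Fa|exact: Fmeet].
  have inU X : C X -> forall z, X z -> U z by move=> CX z Xz; exists X.
  case=> [Fx|[X CX Xx]]; case=> [Fy|[Y CY Yy]].
  - by exists (fun _ => False); split=> //; left.
  - by exists Y; split; [exact: CP|exact: inU|left|right].
  - by exists X; split; [exact: CP|exact: inU|right|left].
  - have [XY|YX] := Ctot X Y CX CY.
    + by exists Y; split; [exact: CP|exact: inU|right; exact: XY|right].
    + by exists X; split; [exact: CP|exact: inU|right|right; exact: YX].
split; first split.
- by left; case: filterF.
- move=> a b ab Ua; have [H [[[_ Hup _] _] HU Ha _]] := in_one _ _ Ua Ua.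
  by case: (Hup a b ab Ha) => [?|/HU ?]; [left|right].
- move=> a b Ua Ub; have [H [[[_ _ Hmeet] _] HU Ha Hb]] := in_one _ _ Ua Ub.
  by case: (Hmeet a b Ha Hb) => [?|/HU ?]; [left|right].
- by move=> x Ux; have [H [[_ Hdisj] _ Hx _]] := in_one _ _ Ux Ux; exact: Hdisj.
Qed.

Lemma exists_maximal_disjoint_filter :
  exists2 G, maximal_disjoint_filter I G & forall x, F x -> G x.
Proof.
have [A [[filterA disjA] maxA]] := exists_maximal_extension.
exists (fun x => F x \/ A x); last by left.
split=> // G' [G'1 G'up G'meet] AG' disjG' x G'x; apply: contrapT => nAx.
apply: (maxA G').
  by split=> [z Az|G'A]; [apply: AG'; right|apply: nAx; right; exact: G'A].
have FG' z : F z \/ G' z -> G' z by case=> // Fz; apply: AG'; left.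
split; first split.
- by right.
- by move=> a b ab /FG' G'a; right; exact: G'up G'a.
- by move=> a b /FG' G'a /FG' G'b; right; exact: G'meet.
- by move=> z /FG'; exact: disjG'.
Qed.

Lemma prime_filter_separation : exists2 p, prime_filter p &
  (forall x, F x -> p x) /\ (forall x, p x -> ~ I x).
Proof.
have [G maxG FG] := exists_maximal_disjoint_filter.
exists G; first exact: maximal_filter_prime idealI maxG.
by split=> //; case: maxG.
Qed.

End Separation.

Lemma prime_filter_avoiding I b : lattice_ideal I -> ~ I b ->
  exists2 p, prime_filter p & p b /\ forall x, p x -> ~ I x.
Proof.
move=> idealI nIb.
have [|p pp [bp disjp]] := prime_filter_separation _ _ (ge_filter b) idealI.
  by case: idealI => _ Idown _ x bx /(Idown _ _ bx).
by exists p => //; split=> //; exact: bp.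
Qed.

End LatticeFilters.

Section CodimChains.
Context {disp : Order.disp_t} {L : tbDistrLatticeType disp}.
Implicit Types (p q : L -> Prop).

Lemma codim_ge_ideal n : lattice_ideal (@codim_ge _ L n).
Proof.
split=> [p [_ p0 _ _ _] //|a b ab hb p pp pa|a b ha hb p pp].
  by apply: hb => //; case: pp => _ _ pup _ _; exact: pup pa.
by case: (pp) => _ _ _ _ pjoin /pjoin[/ha|/hb]; apply.
Qed.

Lemma height_coheight_chain n m {q} : prime_filter q ->
  height_ge n q -> coheight_ge m q ->
  exists2 q0 : L -> Prop, prime_filter q0 & coheight_ge (n + m) q0.
Proof.
elim: n m q => [|n IH] m q pq; first by move=> _ hc; exists q.
move=> [q' [pq' [q'q hq']]] hc; rewrite addSnnS.
by apply: IH pq' hq' _; exists q.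
Qed.

Lemma coheight_height_chain n m {q} : prime_filter q ->
  coheight_ge n q -> height_ge m q ->
  exists2 q0 : L -> Prop, prime_filter q0 & height_ge (n + m) q0.
Proof.
elim: n m q => [|n IH] m q pq; first by move=> _ hc; exists q.
move=> [q' [pq' [qq' hq']]] hc; rewrite addSnnS.
by apply: IH pq' hq' _; exists q.
Qed.

End CodimChains.

Section CoHeyting.
Context {disp : Order.disp_t} {L : tbDistrLatticeType disp}.
Context {sub : L -> L -> L} (HL : coHeyting sub).
Implicit Types (a b c x y : L) (p q r s : L -> Prop).

Lemma le_join_sub a b : a <= b `|` sub a b.
Proof. exact/HL. Qed.

Lemma subxx a : sub a a = \bot.
Proof. by apply/eqP; rewrite -lex0; apply/HL; rewrite joinx0. Qed.

Lemma prime_filter_sub {p a b} : prime_filter p -> p a -> ~ p b -> p (sub a b).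
Proof.
by case=> _ _ pup _ pjoin pa npb; case: (pjoin _ _ (pup _ _ (le_join_sub a b) pa)).
Qed.

Lemma prime_below_sub {r c x} : prime_filter r -> r (sub c x) ->
  exists s, [/\ prime_filter s, forall y, s y -> r y, s c & ~ s x].
Proof.
move=> pr rcx; have [_ r0 rup _ _] := pr.
set I := ideal_join (fun y => ~ r y) (fun y => y <= x).
have idealI : lattice_ideal I.
  by apply: ideal_join_ideal; [exact: prime_filter_compl|exact: le_ideal].
have [|s ps [sc disjs]] := prime_filter_avoiding _ c idealI.
  move=> [i [j [nri jx cij]]]; apply: nri; apply: rup rcx; apply/HL.
  by apply: le_trans cij _; rewrite joinC leU2.
exists s; split=> // [y sy|sx].
  by apply: contrapT => nry; exact: disjs _ sy (ideal_join_l (le0x x) nry).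
exact: disjs _ sx (ideal_join_r (I := fun y => ~ r y) r0 (lexx x)).
Qed.

Lemma height_ge_exists_codim n {p} : prime_filter p -> height_ge n p ->
  exists2 c, p c & codim_ge n c.
Proof.
elim: n p => [|n IH] p pp /=; first by exists \top => //; case: pp.
move=> [q [pq [[qp [x [px nqx]]] hq]]].
have [c qc cc] := IH q pq hq.
have [_ _ pup pmeet _] := pp.
exists (x `&` sub c x); first exact: pmeet _ _ px (qp _ (prime_filter_sub pq qc nqx)).
move=> r pr rxcx; have [_ _ rup _ _] := pr.
have [s [ps sr sc nsx]] := prime_below_sub pr (rup _ _ (leIr _ _) rxcx).
exists s; split=> //; split; last exact: cc.
by split=> //; exists x; split=> //; exact: rup _ _ (leIl _ _) rxcx.
Qed.

End CoHeyting.

Definition bounded_lattice_morphism {d1 d2 : Order.disp_t}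
    {L : tbDistrLatticeType d1} {L' : tbDistrLatticeType d2} (phi : L -> L') :=
  [/\ phi \bot = \bot, phi \top = \top,
      {morph phi : x y / x `|` y} & {morph phi : x y / x `&` y}].

Definition up_image {d1 d2 : Order.disp_t}
    {L : tbDistrLatticeType d1} {L' : tbDistrLatticeType d2}
    (phi : L -> L') (F : L -> Prop) (y : L') : Prop :=
  exists2 a, F a & phi a <= y.

Definition down_image {d1 d2 : Order.disp_t}
    {L : tbDistrLatticeType d1} {L' : tbDistrLatticeType d2}
    (phi : L -> L') (I : L -> Prop) (y : L') : Prop :=
  exists2 a, I a & y <= phi a.

Section LatticeMorphism.
Context {d1 d2 : Order.disp_t}
  {L : tbDistrLatticeType d1} {L' : tbDistrLatticeType d2}.
Context {phi : L -> L'} (phi_morph : bounded_lattice_morphism phi).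
Implicit Types (a b : L) (y : L') (F I p : L -> Prop) (q : L' -> Prop).

Lemma le_morph : {homo phi : a b / a <= b}.
Proof. by case: phi_morph => _ _ phiU _ a b ab; rewrite -(join_r ab) phiU leUl. Qed.

Lemma preimage_prime_filter {q} : prime_filter q -> prime_filter (fun a => q (phi a)).
Proof.
case: phi_morph => phi0 phi1 phiU phiI [q1 nq0 qup qmeet qjoin].
split=> [|||a b|a b]; rewrite ?phi0 ?phi1 ?phiI ?phiU //.
- by move=> a b /le_morph; exact: qup.
- exact: qmeet.
- exact: qjoin.
Qed.

Lemma up_image_filter {F} : lattice_filter F -> lattice_filter (up_image phi F).
Proof.
case: phi_morph => _ _ _ phiI [F1 _ Fmeet].
split=> [|y y' yy' [a Fa ay]|y y' [a Fa ay] [b Fb by']].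
- by exists \top => //; exact: lex1.
- by exists a => //; exact: le_trans yy'.
- by exists (a `&` b); [exact: Fmeet|rewrite phiI leI2].
Qed.

Lemma down_image_ideal {I} : lattice_ideal I -> lattice_ideal (down_image phi I).
Proof.
case: phi_morph => _ _ phiU _ [I0 _ IU].
split=> [|y y' yy' [a Ia y'a]|y y' [a Ia ya] [b Ib y'b]].
- by exists \bot => //; exact: le0x.
- by exists a => //; exact: le_trans y'a.
- by exists (a `|` b); [exact: IU|rewrite phiU leU2].
Qed.

Lemma height_ge_preimage n {q} : surj phi -> prime_filter q ->
  height_ge n q -> height_ge n (fun a => q (phi a)).
Proof.
move=> phi_surj; elim: n q => [//|n IH] q pq [q' [pq' [[q'q [y [qy nq'y]]] hq']]].
exists (fun a => q' (phi a)); split; first exact: preimage_prime_filter.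
split; last exact: IH.
have [a ay] := phi_surj y.
by split=> [b|]; [exact: q'q|exists a; rewrite ay].
Qed.

End LatticeMorphism.

Lemma coH_morphism_lattice {d1 d2 : Order.disp_t}
    {L : tbDistrLatticeType d1} {L' : tbDistrLatticeType d2}
    {sub : L -> L -> L} {sub' : L' -> L' -> L'} {phi : L -> L'} :
  coH_morphism sub sub' phi -> bounded_lattice_morphism phi.
Proof. by case. Qed.

Section CoHeytingMorphism.
Context {d1 d2 : Order.disp_t}
  {L : tbDistrLatticeType d1} {L' : tbDistrLatticeType d2}.
Context {sub : L -> L -> L} {sub' : L' -> L' -> L'}.
Context (HL : coHeyting sub) (HL' : coHeyting sub').
Context {phi : L -> L'} (Hphi : coH_morphism sub sub' phi).
Implicit Types (a b : L) (y : L') (p : L -> Prop) (q : L' -> Prop).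

Let phi_lattice : bounded_lattice_morphism phi := coH_morphism_lattice Hphi.

Lemma going_down {q p} : prime_filter q -> prime_filter p ->
    (forall a, p a -> q (phi a)) ->
  exists q', [/\ prime_filter q', forall y, q' y -> q y
    & forall a, q' (phi a) <-> p a].
Proof.
move=> pq pp p_q; have [_ np0 _ _ _] := pp; have [_ nq0 qup _ _] := pq.
set I := ideal_join (down_image phi (fun a => ~ p a)) (fun y => ~ q y).
have compl_I a : ~ p a -> I (phi a) by move=> npa; apply: ideal_join_l => //; exists a.
have [|||s ps [p_s disjs]] := prime_filter_separation (up_image phi p) I.
- exact/up_image_filter/prime_filter_filter.
- apply: ideal_join_ideal; last exact: prime_filter_compl.
  exact/down_image_ideal/prime_filter_compl.
- move=> y [a pa ay] [i [j [[b npb ib] nqj yij]]]; apply: nqj.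
  apply: qup (p_q _ (prime_filter_sub HL pp pa npb)); case: Hphi => _ _ _ _ ->.
  by apply/HL'; rewrite (le_trans ay) // (le_trans yij) // leU2.
exists s; split=> // [y sy|a].
  apply: contrapT => nqy; apply: disjs _ sy _.
  by apply: ideal_join_r nqy; exists \bot => //; exact: le0x.
split=> [sa|pa]; last by apply: p_s; exists a.
by apply: contrapT => /compl_I; exact: disjs _ sa.
Qed.

Lemma height_ge_of_preimage n {q p} : prime_filter q -> prime_filter p ->
  (forall a, p a <-> q (phi a)) -> height_ge n p -> height_ge n q.
Proof.
elim: n q p => [//|n IH] q p pq pp pqphi [p' [pp' [[p'p [x [px np'x]]] hp']]].
have [q' [pq' q'q q'p']] := going_down pq pp' (fun a p'a => (pqphi a).1 (p'p _ p'a)).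
exists q'; split=> //; split; last by apply: IH pq' pp' _ hp' => a; rewrite q'p'.
by split=> //; exists (phi x); split; [exact/pqphi|move/q'p'].
Qed.

Lemma codim_ge_morph n {a} : codim_ge n a -> codim_ge n (phi a).
Proof.
move=> ha q pq qa; have pq_phi := preimage_prime_filter phi_lattice pq.
by apply: (height_ge_of_preimage n pq pq_phi) => [//|]; exact: ha _ pq_phi qa.
Qed.

Section Surjective.
Hypothesis phi_surj : surj phi.

Lemma codim_ge_preimage_witness n {q} : prime_filter q -> height_ge n q ->
  exists2 c, q (phi c) & codim_ge n c.
Proof.
move=> pq hq; have hq_phi := height_ge_preimage phi_lattice n phi_surj pq hq.
have [c qc cc] :=
  height_ge_exists_codim HL n (preimage_prime_filter phi_lattice pq) hq_phi.
by exists c.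
Qed.

Lemma codim_ge_image n y : codim_ge n y -> exists2 a, codim_ge n a & phi a = y.
Proof.
move=> hy; have [a0 a0y] := phi_surj y; rewrite -{}a0y in hy *.
have [_ codim_down _] := codim_ge_ideal (L := L) n.
suff : down_image phi (codim_ge n) (phi a0).
  case=> a ha a0a; exists (a0 `&` a); first exact: codim_down _ _ (leIr _ _) ha.
  by case: phi_lattice => _ _ _ ->; exact: meet_l.
apply: contrapT => nI.
have [r pr [ra disjr]] :=
  prime_filter_avoiding _ _ (down_image_ideal phi_lattice (codim_ge_ideal n)) nI.
have [c rc cc] := codim_ge_preimage_witness n pr (hy r pr ra).
by apply: (disjr _ rc); exists c.
Qed.

Lemma dim_lt_kernel n : dim_lt L' n <-> forall a, codim_ge n a -> phi a = \bot.
Proof.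
split=> [dimL' a ha|ker q pq _ hq].
  apply: contrapT => nker.
  have [|q pq [qa _]] := prime_filter_avoiding _ (phi a) (le_ideal \bot).
    by rewrite lex0 => /eqP.
  have [q0 pq0] := height_coheight_chain n 0 pq (codim_ge_morph n ha _ pq qa) I.
  by rewrite addn0 => hq0; apply: (dimL' q0 pq0 _ hq0); case: pq0.
have [r pr] := coheight_height_chain n 0 pq hq I; rewrite addn0 => hr.
have [c rc /ker phic] := codim_ge_preimage_witness n pr hr.
by case: pr => _ + _ _ _; rewrite -phic.
Qed.

Lemma codim_ge_of_morph n a : (forall k, phi k = \bot -> codim_ge n k) ->
  codim_ge n (phi a) -> codim_ge n a.
Proof.
move=> ker /codim_ge_image [a' ha' a'a].
have [_ codim_down codim_join] := codim_ge_ideal (L := L) n.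
apply: codim_down (le_join_sub HL a a') (codim_join _ _ ha' (ker _ _)).
by case: Hphi => _ _ _ _ ->; rewrite a'a subxx.
Qed.

Lemma is_eps_morph n e : is_eps L n e -> is_eps L' n (phi e).
Proof.
move=> he b; split=> [/codim_ge_image [a /he ae <-]|be].
  exact: le_morph phi_lattice _ _ ae.
have [_ codim_down _] := codim_ge_ideal (L := L') n.
exact: codim_down _ _ be (codim_ge_morph n (proj2 (he e) (lexx e))).
Qed.

End Surjective.
End CoHeytingMorphism.

Theorem corollary3p9 (d1 d2 : Order.disp_t)
  (L : tbDistrLatticeType d1) (L' : tbDistrLatticeType d2)
  (sub : L -> L -> L) (sub' : L' -> L' -> L')
  (HL : coHeyting sub) (HL' : coHeyting sub')
  (phi : L -> L') (Hphi : coH_morphism sub sub' phi)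
  (d : nat) (hd : (0 < d)%N) :
  (* (1) *)
  (forall a, dIdeal L d a -> dIdeal L' d (phi a)) /\
  (* (2) *)
  (surj phi ->
     (forall b, dIdeal L' d b <-> exists2 a, dIdeal L d a & phi a = b) /\
     (dim_lt L' d <-> (forall a, dIdeal L d a -> kernel phi a)) /\
     ((forall a, kernel phi a -> dIdeal L d a) <->
      (forall a, dIdeal L' d (phi a) <-> dIdeal L d a))) /\
  (* (3) *)
  (surj phi -> forall e, is_eps L d e ->
     (exists e', is_eps L' d e') /\ is_eps L' d (phi e)).
Proof.
have morph a : dIdeal L d a -> dIdeal L' d (phi a) := codim_ge_morph HL HL' Hphi d.
split=> //; split=> phi_surj.
  split; first by split=> [/(codim_ge_image HL Hphi phi_surj d)|[a /morph ha <-]].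
  split; first exact: (dim_lt_kernel HL HL' Hphi phi_surj d).
  split=> [ker a|equiv a ka].
    by split=> [/(codim_ge_of_morph HL HL' Hphi phi_surj d a ker)|/morph].
  by apply/equiv; rewrite ka; case: (codim_ge_ideal (L := L') d).
move=> e /(is_eps_morph HL HL' Hphi phi_surj) he.
by split; first exists (phi e).
Qed.
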